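(* Consider the discrete-time closed-loop system $x(t+1)=f(x(t),v(t))$ with $x(t)\in\mathbb{R}^n$, $v(t)\in\mathbb{R}^m$, a constraint set $\mathcal{C}\subset\mathbb{R}^{n+m}$, a set $P\subseteq\mathbb{R}^{n+m}$ (not assumed invariant), $Q=Q^{\mathrm T}\succ0$, and a desired reference sequence $r(t)$. Assume A2, A3, A4 and A5 (see context) hold. Let $v(0)$ satisfy $(x(0),v(0))\in P$, and for $t\ge1$ let $v(t)$ be generated by the modified Command Governor (see context). Suppose there exist scalars $\varepsilon',\delta'>0$ such that, at every time $t$ with $\|x(t)-x_{v(t-1)}\|<\varepsilon'$, the resulting $v(t)$ is feasible, $(x(t),v(t))\in P$, and satisfies $$\|v(t)-r^*(t)\|_Q^2\le\max\{0,\ \|v(t-1)-r^*(t)\|_Q^2-(\delta')^2\},$$ where $r^*(t)=\arg\min_{v\in R_P}\|v-r(t)\|_Q^2$. Then: 1. $(x(t),v(t))\in\mathcal{C}$ for all $t\ge0$. 2. If $r(t)=r_0$ for all $t\ge\hat t$ and $r_0\in R_P$, then there is $T$ with $v(t)=r_0$ for all $t\ge T$. 3. If $r(t)=r_0$ for all $t\ge\hat t$ and $r_0\notin R_P$, then there is $T$ with $v(t)=r^*$ for all $t\ge T$, where $r^*=\arg\min_{v\in R_P}\|v-r_0\|_Q^2$.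
   Context: Notation: $\|w\|_Q^2=w^{\mathrm T}Qw$. For a constant reference $v$ and initial state $x_0$, $x(t;x_0,v)$ denotes the solution of $x(t+1)=f(x(t),v)$ with $x(0)=x_0$. The maximum output admissible set is $O_\infty=\{(x_0,v): (x(t;x_0,v),v)\in\mathcal{C}\ \forall t\in\mathbb{Z}_{\ge0}\}$. For $x\in\mathbb{R}^n$ let $P_x=\{v:(x,v)\in P\}$; for $v\in\mathbb{R}^m$ let $P_v=\{x:(x,v)\in P\}$. Assumptions: A2: For each $v$ there is a unique equilibrium $x_v$ with $f(x_v,v)=x_v$, and $v\mapsto x_v$ is Lipschitz continuous; the set $R_P=\{v:(x_v,v)\in P\}$ and the sets $P_x$ (for every $x$) are closed and convex. A3: There is $\varepsilon>0$ such that for every $v\in R_P$, $P_v$ contains the ball of radius $\varepsilon$ centered at $x_v$. A4: $P\subseteq O_\infty\subseteq\mathcal{C}$. A5: For any reference sequence $v(t)$ with $v(t)-v(t-1)\to0$, the corresponding solution satisfies $x(t)-x_{v(t)}\to0$ as $t\to\infty$. Modified Command Governor: at each time $t\ge1$, some (possibly suboptimal, arbitrary) candidate $v'\in\mathbb{R}^m$ for the problem $\min_v\|r(t)-v\|_Q^2$ s.t. $(x(t),v)\in P$ is produced. The candidate is accepted, $v(t)=v'$, if both $(x(t),v')\in P$ and $\|v'-r(t)\|_Q^2\le\|v(t-1)-r(t)\|_Q^2-\|v'-v(t-1)\|_Q^2$; otherwise it is rejected and $v(t)=v(t-1)$. *)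

From HB Require Import structures.
From mathcomp Require Import all_boot all_order all_algebra.
From mathcomp Require Import all_classical all_reals all_analysis.
Set Implicit Arguments. Unset Strict Implicit. Unset Printing Implicit Defensive.
Import Order.TTheory GRing.Theory Num.Theory.
Import numFieldNormedType.Exports.
Local Open Scope ring_scope.

Definition enorm {R : realType} {k : nat} (w : 'cV[R]_k) : R :=
  Num.sqrt (\sum_(i < k) w i 0 ^+ 2).

Definition qnorm2 {R : realType} {k : nat} (Q : 'M[R]_k) (w : 'cV[R]_k) : R :=
  (w^T *m Q *m w) 0 0.

Definition sym_posdef {R : realType} {k : nat} (Q : 'M[R]_k) : Prop :=
  Q^T = Q /\ forall w : 'cV[R]_k, w != 0 -> 0 < qnorm2 Q w.

Definition convex_set {R : realType} {k : nat} (S : 'cV[R]_k -> Prop) : Prop :=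
  forall a b : 'cV[R]_k, forall l : R, S a -> S b -> 0 <= l -> l <= 1 ->
    S (l *: a + (1 - l) *: b).

Definition traj {R : realType} {n m : nat} (f : 'cV[R]_n -> 'cV[R]_m -> 'cV[R]_n)
  (x0 : 'cV[R]_n) (v : 'cV[R]_m) (t : nat) : 'cV[R]_n :=
  iter t (fun x => f x v) x0.

Definition Oinf {R : realType} {n m : nat} (f : 'cV[R]_n -> 'cV[R]_m -> 'cV[R]_n)
  (C : 'cV[R]_n -> 'cV[R]_m -> Prop) (x0 : 'cV[R]_n) (v : 'cV[R]_m) : Prop :=
  forall t : nat, C (traj f x0 v t) v.

Definition tends_to_zero {R : realType} {k : nat} (u : nat -> 'cV[R]_k) : Prop :=
  forall e : R, 0 < e -> exists N : nat, forall t : nat, (N <= t)%N -> enorm (u t) < e.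

Definition is_argmin {R : realType} {k : nat} (Q : 'M[R]_k) (S : 'cV[R]_k -> Prop)
  (r w : 'cV[R]_k) : Prop :=
  S w /\ forall u, S u -> qnorm2 Q (w - r) <= qnorm2 Q (u - r).

Definition RP {R : realType} {n m : nat} (P : 'cV[R]_n -> 'cV[R]_m -> Prop)
  (xeq : 'cV[R]_m -> 'cV[R]_n) (v : 'cV[R]_m) : Prop := P (xeq v) v.

Definition A2 {R : realType} {n m : nat} (f : 'cV[R]_n -> 'cV[R]_m -> 'cV[R]_n)
  (P : 'cV[R]_n -> 'cV[R]_m -> Prop) (xeq : 'cV[R]_m -> 'cV[R]_n) : Prop :=
  (forall v, f (xeq v) v = xeq v) /\
  (forall v x, f x v = x -> x = xeq v) /\
  (exists L : R, forall v w, enorm (xeq v - xeq w) <= L * enorm (v - w)) /\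
  closed [set v | RP P xeq v] /\ convex_set (RP P xeq) /\
  (forall x, closed [set v | P x v] /\ convex_set (P x)).

Definition A3 {R : realType} {n m : nat}
  (P : 'cV[R]_n -> 'cV[R]_m -> Prop) (xeq : 'cV[R]_m -> 'cV[R]_n) : Prop :=
  exists eps : R, 0 < eps /\
    forall v, RP P xeq v -> forall x, enorm (x - xeq v) < eps -> P x v.

Definition A4 {R : realType} {n m : nat} (f : 'cV[R]_n -> 'cV[R]_m -> 'cV[R]_n)
  (C P : 'cV[R]_n -> 'cV[R]_m -> Prop) : Prop :=
  (forall x v, P x v -> Oinf f C x v) /\ (forall x v, Oinf f C x v -> C x v).

Definition A5 {R : realType} {n m : nat} (f : 'cV[R]_n -> 'cV[R]_m -> 'cV[R]_n)
  (xeq : 'cV[R]_m -> 'cV[R]_n) : Prop :=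
  forall (vs : nat -> 'cV[R]_m) (xs : nat -> 'cV[R]_n),
    (forall t, xs t.+1 = f (xs t) (vs t)) ->
    tends_to_zero (fun t => vs t.+1 - vs t) ->
    tends_to_zero (fun t => xs t - xeq (vs t)).

Definition cg_accept {R : realType} {n m : nat} (Q : 'M[R]_m)
  (P : 'cV[R]_n -> 'cV[R]_m -> Prop) (xt : 'cV[R]_n) (vprev c rt : 'cV[R]_m) : Prop :=
  P xt c /\ qnorm2 Q (c - rt) <= qnorm2 Q (vprev - rt) - qnorm2 Q (c - vprev).

Definition cg_step {R : realType} {n m : nat} (Q : 'M[R]_m)
  (P : 'cV[R]_n -> 'cV[R]_m -> Prop) (xt : 'cV[R]_n) (vprev c rt vt : 'cV[R]_m) : Prop :=
  (cg_accept Q P xt vprev c rt -> vt = c) /\ (~ cg_accept Q P xt vprev c rt -> vt = vprev).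

From Pilot Require Import Defs.
From HB Require Import structures.
From mathcomp Require Import all_boot all_order all_algebra.
From mathcomp Require Import all_classical all_reals all_analysis.
From mathcomp Require Import ring lra.
Import Order.TTheory GRing.Theory Num.Theory.
Import numFieldNormedType.Exports.
Local Open Scope ring_scope.

(* Once the reference is constant, every accepted command lowers the cost
   ||v - r0||_Q^2 by at least ||v(t) - v(t-1)||_Q^2 and a rejected one keeps v
   fixed, so the cost is nonincreasing and the increments of v vanish.  By A5
   and the Lipschitz continuity of v |-> x_v the state then eventually stays
   eps'-close to x_{v(t-1)}, where the hypothesis makes ||v - r*||_Q^2 drop by
   delta'^2 at each step until it reaches 0.  Admissibility is invariant since
   accepted commands lie in P, which is contained in O_inf, and O_inf is
   invariant along the dynamics for a fixed command. *)

Section DescentSequences.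
Context {R : archiFieldType}.

Lemma decrements_vanish {W d : nat -> R} {t0 : nat} :
  (forall t, 0 <= W t) -> (forall t, 0 <= d t) ->
  (forall t, (t0 < t)%N -> W t + d t <= W t.-1) ->
  forall e, 0 < e -> exists N, forall t, (N <= t)%N -> d t < e.
Proof.
move=> W_ge0 d_ge0 W_dec e e_gt0.
have W_nonincr t s : (t0 <= t <= s)%N -> W s <= W t.
  move=> /andP[t0t]; elim: s => [|s IHs]; first by rewrite leqn0 => /eqP->.
  rewrite leq_eqVlt => /orP[/eqP<- //|]; rewrite ltnS => ts.
  have := W_dec s.+1 (leq_trans t0t ts); have := d_ge0 s.+1.
  have := IHs ts; lra.
apply: contrapT => /forallNP often_large.
(* each late index with [e <= d t] costs [e] of the budget [W t0] *)
have budget k : exists t, (t0 <= t)%N /\ W t <= W t0 - k%:R * e.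
  elim: k => [|k [t [t0t Wt]]]; first by exists t0; rewrite mul0r subr0.
  have /existsNP[s /not_implyP[ts /negP]] := often_large t.+1.
  rewrite -leNgt => d_large.
  have t0s : (t0 < s)%N by exact: leq_ltn_trans t0t ts.
  exists s; split; first exact: ltnW.
  have := W_dec s t0s; have := W_nonincr t s.-1.
  rewrite t0t -ltnS prednK ?ts; last exact: leq_ltn_trans (leq0n _) t0s.
  rewrite -natr1 => /(_ isT); lra.
have K_large := archi_boundP (divr_ge0 (W_ge0 t0) (ltW e_gt0)).
have [t [_ Wt]] := budget (Num.Def.archi_bound (W t0 / e)).
rewrite ltr_pdivrMr // in K_large.
have := W_ge0 t; lra.
Qed.

Lemma max0_descent_vanishes {V : nat -> R} {d : R} {t0 : nat} :
  0 < d -> (forall t, 0 <= V t) ->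
  (forall t, (t0 < t)%N -> V t <= Num.max 0 (V t.-1 - d)) ->
  exists T, forall t, (T <= t)%N -> V t = 0.
Proof.
move=> d_gt0 V_ge0 V_dec.
have descent k : V (t0 + k)%N <= 0 \/ V (t0 + k)%N <= V t0 - k%:R * d.
  elim: k => [|k IHk]; first by right; rewrite addn0 mul0r subr0.
  have := V_dec (t0 + k).+1; rewrite addnS ltnS leq_addr /= le_max => /(_ isT).
  rewrite -natr1; case/orP => Vle; [by left | case: IHk => IHk]; lra.
have K_large := archi_boundP (divr_ge0 (V_ge0 t0) (ltW d_gt0)).
rewrite ltr_pdivrMr // in K_large.
exists (t0 + Num.Def.archi_bound (V t0 / d))%N => t Tt.
apply/eqP; rewrite eq_le V_ge0 andbT.
have t0t : (t0 <= t)%N by exact: leq_trans (leq_addr _ _) Tt.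
have : (Num.Def.archi_bound (V t0 / d) <= t - t0)%N by rewrite leq_subRL.
rewrite -(ler_nat R) => /(ler_wpM2r (ltW d_gt0)) K_le.
by case: (descent (t - t0)%N); rewrite subnKC //; lra.
Qed.

End DescentSequences.

Lemma continuous_sumr (R : realType) (T : topologicalType) (I : Type) (s : seq I)
    (F : I -> T -> R) :
  (forall i, continuous (F i)) -> continuous (fun u => \sum_(i <- s) F i u).
Proof. by move=> F_cont; apply: continuous_big => //; exact: add_continuous. Qed.

Definition sumsq {R : realType} {k : nat} (w : 'cV[R]_k) : R := \sum_i w i 0 ^+ 2.

Lemma sumsq_ge0 (R : realType) k (w : 'cV[R]_k) : 0 <= sumsq w.
Proof. by apply: sumr_ge0 => i _; exact: sqr_ge0. Qed.

Section EuclideanNorm.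
Context {R : realType}.

Lemma enorm_ltE {k} (w : 'cV[R]_k) e : 0 < e -> (enorm w < e) = (sumsq w < e ^+ 2).
Proof.
by move=> e_gt0; rewrite /enorm -{1}(gtr0_norm e_gt0) -sqrtr_sqr ltr_sqrt ?exprn_gt0.
Qed.

Lemma sumsqD_le {k} (a b : 'cV[R]_k) : sumsq (a + b) <= 2 * sumsq a + 2 * sumsq b.
Proof.
rewrite /sumsq !mulr_sumr -big_split /=; apply: ler_sum => i _.
by rewrite !mxE; have := sqr_ge0 (a i 0 - b i 0); nra.
Qed.

Lemma tends_to_zeroD {k} {a b : nat -> 'cV[R]_k} :
  tends_to_zero a -> tends_to_zero b -> tends_to_zero (fun t => a t + b t).
Proof.
move=> a0 b0 e e_gt0; have e2_gt0 : 0 < e / 2 by rewrite divr_gt0.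
have [Na Ha] := a0 _ e2_gt0; have [Nb Hb] := b0 _ e2_gt0.
exists (maxn Na Nb) => t; rewrite geq_max => /andP[/Ha at_small /Hb bt_small].
rewrite enorm_ltE //; rewrite enorm_ltE // in at_small; rewrite enorm_ltE // in bt_small.
apply: le_lt_trans (sumsqD_le (a t) (b t)) _.
have -> : e ^+ 2 = 2 * (e / 2) ^+ 2 + 2 * (e / 2) ^+ 2 by field.
by rewrite ltrD // ltr_pM2l.
Qed.

Lemma tends_to_zero_lipschitz {k l} {g : 'cV[R]_k -> 'cV[R]_l} {L : R} {a b : nat -> 'cV[R]_k} :
  (forall u w, enorm (g u - g w) <= L * enorm (u - w)) ->
  tends_to_zero (fun t => a t - b t) -> tends_to_zero (fun t => g (a t) - g (b t)).
Proof.
move=> g_lip ab0 e e_gt0.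
have L1_gt0 : 0 < `|L| + 1 by rewrite ltr_wpDl.
have [N HN] := ab0 _ (divr_gt0 e_gt0 L1_gt0).
exists N => t /HN ab_small; apply: le_lt_trans (g_lip _ _) _.
rewrite ltr_pdivlMr // mulrC in ab_small.
have enorm_ge0 : 0 <= enorm (a t - b t) := sqrtr_ge0 _.
apply: le_lt_trans ab_small.
by rewrite mulrDl mul1r ler_wpDr // ler_wpM2r // real_ler_norm ?num_real.
Qed.

End EuclideanNorm.

Section QuadraticForm.
Context {R : realType} {k : nat} {Q : 'M[R]_k}.

Lemma qnorm2E (w : 'cV[R]_k) :
  qnorm2 Q w = \sum_j (\sum_i w i 0 * Q i j) * w j 0.
Proof.
rewrite /qnorm2 mxE; apply: eq_bigr => j _; rewrite mxE; congr (_ * _).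
by apply: eq_bigr => i _; rewrite mxE.
Qed.

Lemma qnorm2Z a w : qnorm2 Q (a *: w) = a ^+ 2 * qnorm2 Q w.
Proof.
rewrite !qnorm2E mulr_sumr; apply: eq_bigr => j _.
rewrite !mulr_suml mulr_sumr; apply: eq_bigr => i _.
by rewrite !mxE; ring.
Qed.

Lemma qnorm20 : qnorm2 Q 0 = 0.
Proof. by rewrite -(scale0r 0) qnorm2Z expr0n mul0r. Qed.

Lemma qnorm2_parallelogram a b :
  qnorm2 Q (a + b) + qnorm2 Q (a - b) = 2 * qnorm2 Q a + 2 * qnorm2 Q b.
Proof.
rewrite /qnorm2 !raddfD raddfN /= !(mulmxDl, mulmxDr, mulNmx, mulmxN) !mxE.
ring.
Qed.

Hypothesis Q_pos : forall w, w != 0 -> 0 < qnorm2 Q w.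

Lemma qnorm2_ge0 w : 0 <= qnorm2 Q w.
Proof. by case: (eqVneq w 0) => [->|/Q_pos/ltW //]; rewrite qnorm20. Qed.

Lemma is_argmin_refl {S : 'cV[R]_k -> Prop} {r} : S r -> is_argmin Q S r r.
Proof. by move=> Sr; split=> // u _; rewrite subrr qnorm20 qnorm2_ge0. Qed.

Lemma qnorm2_le0 w : qnorm2 Q w <= 0 -> w = 0.
Proof. by case: (eqVneq w 0) => // /Q_pos; rewrite leNgt => ->. Qed.

Lemma argmin_unique {S : 'cV[R]_k -> Prop} {r w1 w2} :
  Defs.convex_set S -> is_argmin Q S r w1 -> is_argmin Q S r w2 -> w1 = w2.
Proof.
move=> S_convex [Sw1 w1_min] [Sw2 w2_min].
have half_ge0 : (0 : R) <= 2^-1 by rewrite invr_ge0.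
have half_le1 : (2^-1 : R) <= 1 by rewrite invf_le1 // ler1n.
have mid_min := w1_min _ (S_convex _ _ _ Sw1 Sw2 half_ge0 half_le1).
have mid_eq : 2^-1 *: w1 + (1 - 2^-1) *: w2 - r = 2^-1 *: ((w1 - r) + (w2 - r)).
  by apply/matrixP=> i j; rewrite !mxE; field.
have diff_eq : w1 - r - (w2 - r) = w1 - w2 by rewrite opprB addrA subrK.
have quarter : (2^-1 : R) ^+ 2 = 4^-1 by rewrite expr2 -invfM; congr (_^-1); ring.
rewrite mid_eq qnorm2Z quarter in mid_min.
have := qnorm2_parallelogram (w1 - r) (w2 - r); rewrite diff_eq.
have := w1_min _ Sw2; have := w2_min _ Sw1.
by move=> ? ? ?; apply/eqP; rewrite -subr_eq0; apply/eqP/qnorm2_le0; lra.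
Qed.

(* [mu] is the minimum of the form on the Euclidean unit sphere, compact by
   [rV_compact]; hence the detour through row vectors. *)
Lemma qnorm2_coercive : exists2 mu : R, 0 < mu & forall w, mu * sumsq w <= qnorm2 Q w.
Proof.
pose g (u : 'rV[R]_k) := qnorm2 Q u^T.
pose h (u : 'rV[R]_k) := \sum_i u ord0 i ^+ 2.
pose unitS := [set u | h u = 1]%classic.
have coord_cont i : continuous (fun u : 'rV[R]_k => u ord0 i) by exact: coord_continuous.
have h_cont : continuous h.
  by apply: continuous_sumr => i u; apply: continuousM; exact: coord_cont.
have g_cont : continuous g.
  have -> : g = fun u => \sum_j (\sum_i u ord0 i * Q i j) * u ord0 j.
    apply/funext => u; rewrite /g qnorm2E; apply: eq_bigr => j _.
    by rewrite mxE; congr (_ * _); apply: eq_bigr => i _; rewrite mxE.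
  apply: continuous_sumr => j u; apply: continuousM; last exact: coord_cont.
  apply: continuous_sumr => i {}u; apply: continuousM; first exact: coord_cont.
  exact: cst_continuous.
have unitS_compact : compact unitS.
  have unitS_closed : closed unitS.
    apply: (preimage_closed (f := h) (D := [set x | x = 1])); last exact: closed_eq.
    by move=> u _; exact: h_cont.
  apply: (subclosed_compact unitS_closed (@rV_compact _ _ (fun=> `[(-1 : R), 1]%classic) _)).
    by move=> _; exact: segment_compact.
  move=> u /= hu i; rewrite /= in_itv /=.
  have : u ord0 i ^+ 2 <= 1.
    by rewrite -hu /h (bigD1 i) //= lerDl sumr_ge0 // => j _; exact: sqr_ge0.
  by move=> ?; apply/andP; split; nra.
have normalize w : sumsq w != 0 ->
    unitS ((Num.sqrt (sumsq w))^-1 *: w^T) /\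
    g ((Num.sqrt (sumsq w))^-1 *: w^T) = (sumsq w)^-1 * qnorm2 Q w.
  move=> sw_neq0; have sw_gt0 : 0 < sumsq w by rewrite lt_def sw_neq0 sumsq_ge0.
  have sqrt_sqr : Num.sqrt (sumsq w) ^+ 2 = sumsq w by rewrite sqr_sqrtr // ltW.
  have sqrt_neq0 : Num.sqrt (sumsq w) != 0 by rewrite gt_eqF // sqrtr_gt0.
  split.
    rewrite /unitS /= /h; under eq_bigr do rewrite !mxE exprMn.
    by rewrite -mulr_sumr exprVn sqrt_sqr mulVf.
  by rewrite /g linearZ /= trmxK qnorm2Z exprVn sqrt_sqr.
have [unitS0|unitS_empty] := pselect (unitS !=set0)%classic; last first.
  (* only for [k = 0] *)
  exists 1 => // w; rewrite mul1r.
  have [->|sw_neq0] := eqVneq (sumsq w) 0; first exact: qnorm2_ge0.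
  case: unitS_empty.
  by exists ((Num.sqrt (sumsq w))^-1 *: w^T); exact: (normalize w sw_neq0).1.
have [u0 unitS_u0 u0_min] :=
  compact_EVT_min unitS0 unitS_compact (continuous_subspaceT g_cont).
exists (g u0).
  apply: Q_pos; apply/eqP => u0T_eq0; move: unitS_u0; rewrite inE /unitS /= /h.
  have -> : u0 = 0 by rewrite -[u0]trmxK u0T_eq0 linear0.
  by rewrite big1 => [/eqP|i _]; [rewrite eq_sym oner_eq0 | rewrite mxE expr0n].
move=> w; have [->|sw_neq0] := eqVneq (sumsq w) 0; first by rewrite mulr0 qnorm2_ge0.
have [unitS_w gw] := normalize w sw_neq0.
have sw_gt0 : 0 < sumsq w by rewrite lt_def sw_neq0 sumsq_ge0.
by have := u0_min _ (mem_set unitS_w); rewrite gw mulrC ler_pdivlMr.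
Qed.

Lemma tends_to_zero_qnorm2 (u : nat -> 'cV[R]_k) :
  (forall e, 0 < e -> exists N, forall t, (N <= t)%N -> qnorm2 Q (u t) < e) ->
  tends_to_zero u.
Proof.
move=> u0 e e_gt0; have [mu mu_gt0 Q_coercive] := qnorm2_coercive.
have [N HN] := u0 _ (mulr_gt0 mu_gt0 (exprn_gt0 2 e_gt0)).
exists N => t /HN Qu_small; rewrite enorm_ltE // -(ltr_pM2l mu_gt0).
exact: le_lt_trans (Q_coercive _) Qu_small.
Qed.

End QuadraticForm.

Lemma Oinf_next (R : realType) n m (f : 'cV[R]_n -> 'cV[R]_m -> 'cV[R]_n) C x v :
  Oinf f C x v -> Oinf f C (f x v) v.
Proof. by move=> x_adm t; have := x_adm t.+1; rewrite /traj iterSr. Qed.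

Section CommandGovernor.
Context {R : realType} {n m : nat}.
Context {f : 'cV[R]_n -> 'cV[R]_m -> 'cV[R]_n} {P : 'cV[R]_n -> 'cV[R]_m -> Prop}.
Context {Q : 'M[R]_m} {x : nat -> 'cV[R]_n} {v r c : nat -> 'cV[R]_m}.
Hypothesis x_next : forall t, x t.+1 = f (x t) (v t).
Hypothesis v_cg : forall t, (1 <= t)%N -> cg_step Q P (x t) (v t.-1) (c t) (r t) (v t).

Lemma cg_admissible {C} : A4 f C P -> P (x 0%N) (v 0%N) -> forall t, Oinf f C (x t) (v t).
Proof.
move=> [P_Oinf _] P0; elim=> [|t IHt]; first exact: P_Oinf.
have [accept reject] := v_cg _ (ltn0Sn t).
have [acc|rej] := pselect (cg_accept Q P (x t.+1) (v t) (c t.+1) (r t.+1)).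
  by rewrite (accept acc); exact: P_Oinf _ _ acc.1.
by rewrite (reject rej) x_next; exact: Oinf_next.
Qed.

Lemma cg_cost_decrease t : (1 <= t)%N ->
  qnorm2 Q (v t - r t) + qnorm2 Q (v t - v t.-1) <= qnorm2 Q (v t.-1 - r t).
Proof.
move=> t_ge1; have [accept reject] := v_cg _ t_ge1.
have [acc|rej] := pselect (cg_accept Q P (x t) (v t.-1) (c t) (r t)).
  by rewrite (accept acc); move: acc => [_]; lra.
by rewrite (reject rej) subrr qnorm20 addr0.
Qed.

Context {that : nat} {r0 : 'cV[R]_m}.
Hypothesis r_const : forall t, (that <= t)%N -> r t = r0.
Hypothesis Q_pos : forall w, w != 0 -> 0 < qnorm2 Q w.

Lemma cg_increments_vanish : tends_to_zero (fun t => v t.+1 - v t).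
Proof.
apply: (tends_to_zero_qnorm2 Q_pos) => // e e_gt0.
have W_dec s : (that < s)%N ->
    qnorm2 Q (v s - r0) + qnorm2 Q (v s - v s.-1) <= qnorm2 Q (v s.-1 - r0).
  move=> that_s; rewrite -(r_const _ (ltnW that_s)).
  by apply: cg_cost_decrease; exact: leq_ltn_trans (leq0n _) that_s.
have [N HN] := decrements_vanish (fun t => qnorm2_ge0 Q_pos (v t - r0))
  (fun t => qnorm2_ge0 Q_pos (v t - v t.-1)) W_dec _ e_gt0.
by exists N => t Nt; exact: HN (leq_trans Nt (leqnSn t)).
Qed.

Lemma cg_tracks_equilibrium {xeq : 'cV[R]_m -> 'cV[R]_n} : A2 f P xeq -> A5 f xeq ->
  tends_to_zero (fun t => x t.+1 - xeq (v t)).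
Proof.
move=> [_ [_ [[L xeq_lip] _]]] A5_xv.
have x_xv1 : tends_to_zero (fun t => x t.+1 - xeq (v t.+1)).
  move=> e /(A5_xv _ _ x_next cg_increments_vanish) [N HN].
  by exists N => t Nt; exact: HN (leq_trans Nt (leqnSn t)).
have -> : (fun t => x t.+1 - xeq (v t)) =
    (fun t => (x t.+1 - xeq (v t.+1)) + (xeq (v t.+1) - xeq (v t))).
  by apply/funext => t; rewrite addrA subrK.
exact: tends_to_zeroD x_xv1 (tends_to_zero_lipschitz xeq_lip cg_increments_vanish).
Qed.

Lemma cg_converges {xeq : 'cV[R]_m -> 'cV[R]_n} {rstar : nat -> 'cV[R]_m}
    {eps' delta' : R} {rs : 'cV[R]_m} :
  A2 f P xeq -> A5 f xeq ->
  (forall t, is_argmin Q (RP P xeq) (r t) (rstar t)) ->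
  0 < eps' -> 0 < delta' ->
  (forall t, (1 <= t)%N -> enorm (x t - xeq (v t.-1)) < eps' ->
     qnorm2 Q (v t - rstar t) <= Num.max 0 (qnorm2 Q (v t.-1 - rstar t) - delta' ^+ 2)) ->
  is_argmin Q (RP P xeq) r0 rs ->
  exists T, forall t, (T <= t)%N -> v t = rs.
Proof.
move=> A2_xeq A5_xeq rstar_min eps_gt0 delta_gt0 descent rs_min.
have rstar_const t : (that <= t)%N -> rstar t = rs.
  move=> that_t; have [_ [_ [_ [_ [RP_convex _]]]]] := A2_xeq.
  by apply: (argmin_unique Q_pos RP_convex _ rs_min); rewrite -(r_const _ that_t).
have [N near] := cg_tracks_equilibrium A2_xeq A5_xeq _ eps_gt0.
have [|T V0] := max0_descent_vanishes (V := fun t => qnorm2 Q (v t - rs)) (t0 := maxn N that)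
  (exprn_gt0 2 delta_gt0) (fun t => qnorm2_ge0 Q_pos _).
  move=> t; rewrite gtn_max => /andP[Nt that_t].
  have t_gt0 : (0 < t)%N by exact: leq_ltn_trans (leq0n _) Nt.
  rewrite -(rstar_const _ (ltnW that_t)); apply: descent => //.
  by have := near t.-1; rewrite prednK // -ltnS prednK //; exact.
exists T => t /V0 Vt0; apply/subr0_eq/(qnorm2_le0 Q_pos).
by rewrite Vt0.
Qed.

End CommandGovernor.

Theorem theorem2 (R : realType) (n m : nat)
  (f : 'cV[R]_n -> 'cV[R]_m -> 'cV[R]_n)
  (C P : 'cV[R]_n -> 'cV[R]_m -> Prop)
  (Q : 'M[R]_m) (xeq : 'cV[R]_m -> 'cV[R]_n)
  (x : nat -> 'cV[R]_n) (v r c rstar : nat -> 'cV[R]_m) :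
  sym_posdef Q ->
  A2 f P xeq -> A3 P xeq -> A4 f C P -> A5 f xeq ->
  (forall t, x t.+1 = f (x t) (v t)) ->
  P (x 0%N) (v 0%N) ->
  (forall t, (1 <= t)%N -> cg_step Q P (x t) (v t.-1) (c t) (r t) (v t)) ->
  (forall t, is_argmin Q (RP P xeq) (r t) (rstar t)) ->
  (exists eps' delta' : R, 0 < eps' /\ 0 < delta' /\
     forall t, (1 <= t)%N -> enorm (x t - xeq (v t.-1)) < eps' ->
       P (x t) (v t) /\
       qnorm2 Q (v t - rstar t)
         <= Num.max 0 (qnorm2 Q (v t.-1 - rstar t) - delta' ^+ 2)) ->
  (forall t, C (x t) (v t)) /\
  (forall (that : nat) (r0 : 'cV[R]_m),
     (forall t, (that <= t)%N -> r t = r0) -> RP P xeq r0 ->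
     exists T : nat, forall t, (T <= t)%N -> v t = r0) /\
  (forall (that : nat) (r0 rs : 'cV[R]_m),
     (forall t, (that <= t)%N -> r t = r0) -> ~ RP P xeq r0 ->
     is_argmin Q (RP P xeq) r0 rs ->
     exists T : nat, forall t, (T <= t)%N -> v t = rs).
Proof.
(* A3 is what makes the hypothesis on [eps'] and [delta'] attainable. *)
move=> [_ Q_pos] A2_xeq _ A4_CP A5_xeq x_next P0 v_cg rstar_min
  [eps' [delta' [eps_gt0 [delta_gt0 near_descent]]]].
have descent t t_ge1 near := (near_descent t t_ge1 near).2.
split; first by move=> t; exact: A4_CP.2 _ _ (cg_admissible x_next v_cg A4_CP P0 t).
split=> [that r0 r_const r0_RP | that r0 rs r_const _ rs_min].
  exact: (cg_converges x_next v_cg r_const Q_pos A2_xeq A5_xeq rstar_min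
    eps_gt0 delta_gt0 descent (is_argmin_refl Q_pos r0_RP)).
exact: (cg_converges x_next v_cg r_const Q_pos A2_xeq A5_xeq rstar_min
  eps_gt0 delta_gt0 descent rs_min).
Qed.
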